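(* For every integer $k \geq 1$, let $\mathcal{C}(k)$ denote the greatest common divisor of all the sums $\sum_{i=1}^{k} C_{n+i}$, $n \geq 0$. Then $$\mathcal{C}(k) = \begin{cases} 2P_{k}, & \text{if } k \text{ is even};\\ Q_{k}, & \text{if } k \text{ is odd}.\end{cases}$$
   Context: The Pell sequence $(P_n)_{n\ge0}$ is defined by $P_0=0$, $P_1=1$, $P_n = 2P_{n-1}+P_{n-2}$. The associated Pell sequence $(Q_n)_{n\ge0}$ is defined by $Q_0=1$, $Q_1=1$, $Q_n=2Q_{n-1}+Q_{n-2}$. The Lucas-balancing sequence $(C_n)_{n\ge0}$ is defined by $C_0=1$, $C_1=3$, $C_n=6C_{n-1}-C_{n-2}$. *)

From mathcomp Require Import all_boot.
Set Implicit Arguments. Unset Strict Implicit. Unset Printing Implicit Defensive.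

Fixpoint Pell (n : nat) : nat :=
  match n with
  | 0 => 0
  | 1 => 1
  | S ((S m) as m1) => 2 * Pell m1 + Pell m
  end.

Fixpoint Qell (n : nat) : nat :=
  match n with
  | 0 => 1
  | 1 => 1
  | S ((S m) as m1) => 2 * Qell m1 + Qell m
  end.

(* Lucas-balancing numbers: C_0 = 1, C_1 = 3, C_n = 6 C_(n-1) - C_(n-2).
   The sequence is positive and increasing, so the truncated nat
   subtraction never truncates (6 C_(n-1) >= C_(n-2)). *)
Fixpoint LucBal (n : nat) : nat :=
  match n with
  | 0 => 1
  | 1 => 3
  | S ((S m) as m1) => 6 * LucBal m1 - LucBal m
  end.

Definition is_gcd_family (S : nat -> nat) (g : nat) : Prop :=
  (forall n, g %| S n) /\ (forall d, (forall n, d %| S n) -> d %| g).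

Definition LBsum (k n : nat) : nat := \sum_(1 <= i < k.+1) LucBal (n + i).

(* Since C_n = Q_(2n) and Q_(m+1) = 2 Q_m + Q_(m-1), the sum telescopes:
   2 (C_(n+1) + ... + C_(n+k)) = Q_(c+2k) - Q_c with c = 2n+1.  The addition
   formulas for (Q, P) together with Q_k^2 - 2 P_k^2 = (-1)^k factor this
   difference as 2 Q_k Q_(c+k) for odd k and as 4 P_k P_(c+k) for even k.
   So every sum is a multiple of Q_k (resp. 2 P_k), and the cofactors for
   n = 0 and n = 1 are u_(k+1) and u_(k+3) (u = Q resp. P), which are odd
   and have gcd dividing 2, hence are coprime. *)

From mathcomp Require Import all_boot.
From mathcomp Require Import zify.

Set Implicit Arguments.
Unset Strict Implicit.
Unset Printing Implicit Defensive.

Lemma is_gcd_family_pair (S : nat -> nat) (g m1 m2 : nat) :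
  (forall n, g %| S n) -> gcdn (S m1) (S m2) = g -> is_gcd_family S g.
Proof. by move=> dvd_gS gcd_g; split=> // d dvd_dS; rewrite -gcd_g dvdn_gcd !dvd_dS. Qed.

Section SecondOrderRecurrence.

Variables (a : nat) (u : nat -> nat).
Hypothesis u_rec : forall n, u n.+2 = a * u n.+1 + u n.

Lemma gcdn_rec_consecutive n : gcdn (u n) (u n.+1) = gcdn (u 0) (u 1).
Proof. by elim: n => // n IH; rewrite u_rec gcdnMDl gcdnC. Qed.

Lemma coprime_rec_skip n :
  coprime (u 0) (u 1) -> coprime (u n) (u n.+2) = coprime (u n) a.
Proof.
move=> cop01; rewrite /coprime u_rec gcdnDr Gauss_gcdl //.
by rewrite /coprime gcdn_rec_consecutive.
Qed.

Lemma odd_rec n : ~~ odd a -> odd (u n) = odd (u (odd n)).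
Proof.
move=> even_a; elim/ltn_ind: n => -[|[|n]] // IH.
by rewrite u_rec oddD oddM (negbTE even_a) /= negbK IH.
Qed.

End SecondOrderRecurrence.

Lemma Pell_rec n : Pell n.+2 = 2 * Pell n.+1 + Pell n. Proof. by []. Qed.
Lemma Qell_rec n : Qell n.+2 = 2 * Qell n.+1 + Qell n. Proof. by []. Qed.
Lemma LucBal_rec n : LucBal n.+2 = 6 * LucBal n.+1 - LucBal n. Proof. by []. Qed.

Lemma odd_Qell n : odd (Qell n).
Proof. by rewrite (odd_rec Qell_rec); case: (odd n). Qed.

Lemma odd_Pell n : odd (Pell n) = odd n.
Proof. by rewrite (odd_rec Pell_rec); case: (odd n). Qed.

Lemma LucBal_Qell n : LucBal n = Qell n.*2.
Proof.
elim/ltn_ind: n => -[|[|n]] // IH.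
rewrite LucBal_rec !IH // !doubleS !Qell_rec; lia.
Qed.

(* (Q_(n+1) + P_(n+1) sqrt 2) = (Q_n + P_n sqrt 2) (1 + sqrt 2) *)
Lemma Qell_Pell_succ n :
  Qell n.+1 = Qell n + 2 * Pell n /\ Pell n.+1 = Pell n + Qell n.
Proof. by elim: n => // n [IHQ IHP]; rewrite Qell_rec Pell_rec IHQ IHP; lia. Qed.

Lemma Qell_Pell_add m n :
  Qell (m + n) = Qell m * Qell n + 2 * (Pell m * Pell n)
  /\ Pell (m + n) = Pell m * Qell n + Qell m * Pell n.
Proof.
elim: n => [|n [IHQ IHP]]; first by rewrite addn0 /=; lia.
have [Qmn Pmn] := Qell_Pell_succ (m + n); have [Qn Pn] := Qell_Pell_succ n.
by rewrite addnS Qmn Pmn Qn Pn IHQ IHP; split; nia.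
Qed.

Lemma Qell_Pell_norm k : Qell k ^ 2 + odd k = 2 * Pell k ^ 2 + ~~ odd k.
Proof.
elim: k => // k IH; have [Qk Pk] := Qell_Pell_succ k.
by rewrite Qk Pk /=; case: (odd k) IH => /= IH; nia.
Qed.

Lemma Qell_add_double c k : Qell (c + k.*2) =
  Qell c + if odd k then 2 * Qell k * Qell (c + k) else 4 * Pell k * Pell (c + k).
Proof.
have := Qell_Pell_norm k.
have [Qck _] := Qell_Pell_add (c + k) k; have [Qc Pc] := Qell_Pell_add c k.
rewrite -addnn addnA Qck Qc Pc; case: (odd k) => /= norm; nia.
Qed.

Lemma LBsum_telescope k n :
  2 * LBsum k n + Qell n.*2.+1 = Qell (n.*2.+1 + k.*2).
Proof.
elim: k => [|k IH]; first by rewrite /LBsum big_geq // addn0.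
rewrite /LBsum big_nat_recr // -/(LBsum k n) LucBal_Qell.
have -> : n.*2.+1 + k.+1.*2 = (n.*2.+1 + k.*2).+2 by rewrite doubleS !addnS.
have -> : (n + k.+1).*2 = (n.*2.+1 + k.*2).+1 by rewrite doubleD doubleS !addnS addSn.
by rewrite Qell_rec -IH mulnDr -addnA addnCA.
Qed.

Lemma LBsum_closed k n : LBsum k n =
  if odd k then Qell k * Qell (k + n.*2.+1) else 2 * Pell k * Pell (k + n.*2.+1).
Proof.
have := LBsum_telescope k n; rewrite Qell_add_double [k + _]addnC.
by case: (odd k) => /=; lia.
Qed.

Theorem theorem18 (k : nat) (hk : 1 <= k) :
  is_gcd_family (LBsum k) (if odd k then Qell k else 2 * Pell k).
Proof.
apply: (@is_gcd_family_pair _ _ 0 1) => [n|]; rewrite !LBsum_closed.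
  by case: ifP => _; apply: dvdn_mulr.
rewrite /= addn1 addn3; case: ifP => odd_k; rewrite -muln_gcdr.
  have /eqP -> : coprime (Qell k.+1) (Qell k.+3).
    by rewrite (coprime_rec_skip Qell_rec) // coprimen2 odd_Qell.
  by rewrite muln1.
have /eqP -> : coprime (Pell k.+1) (Pell k.+3).
  by rewrite (coprime_rec_skip Pell_rec) // coprimen2 odd_Pell /= odd_k.
by rewrite muln1.
Qed.
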